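(* Let $s\ge0$, $n=2s+1$, and let $\mathcal{G}_{2s+1}\subset GL_{2s+1}(\mathbb{Z})$ be the group generated by the linear maps $\sigma_1,\dotsc,\sigma_{2s+1}$ of $\mathbb{Z}^{2s+1}$ given in coordinates $k=(k_1,\dotsc,k_{2s+1})$ by \[ \sigma_1:\ k_1\mapsto k_1,\quad k_j\mapsto k_j+k_1\ (j>1); \] \[ \sigma_i\ (2\le i\le 2s+1):\ k_{i-1}\mapsto 2k_{i-1}-k_i,\quad k_i\mapsto k_{i-1},\quad k_j\mapsto k_j\ (j\ne i-1,i). \] For nonzero $k\in\mathbb{Z}^{2s+1}$ put $\gamma=\gcd(k_1,\dotsc,k_{2s+1})$, $\alpha=\#\{i:\ k_i/\gamma\equiv1\pmod2\}$, $\delta=|2\alpha-2s-2|$ and $x_{2s+1}=k_1-k_2+k_3-\dotsb+k_{2s+1}$. Then the triple $(\gamma,\delta,x_{2s+1})$ is invariant under $\mathcal{G}_{2s+1}$: for every $g\in\mathcal{G}_{2s+1}$ and every nonzero $k$, the vectors $k$ and $gk$ have the same values of $\gamma$, $\delta$ and $x_{2s+1}$. *)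

From mathcomp Require Import all_boot all_order all_algebra.
Set Implicit Arguments. Unset Strict Implicit. Unset Printing Implicit Defensive.
Import Order.TTheory GRing.Theory Num.Theory.
Local Open Scope ring_scope.

(* Coordinates are 0-based: paper's k_{j} is k (j-1) 0.
   Paper's sigma_1 is sigma 0; paper's sigma_i (2<=i<=n) is sigma (i-1). *)
Definition sigma (n : nat) (i : 'I_n) : 'M[int]_n :=
  \matrix_(a < n, b < n)
    if (i == 0 :> nat) then
      ((a == b) + ((a != 0 :> nat) && (b == 0 :> nat)))%:Z
    else if (a == i.-1 :> nat) then
      (if (b == i.-1 :> nat) then 2 else if (b == i :> nat) then -1 else 0)
    else if (a == i :> nat) then ((b == i.-1 :> nat) : nat)%:Z
    else ((a == b) : nat)%:Z.

Inductive inG (n : nat) : 'M[int]_n -> Prop :=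
  | inG_gen i : inG (sigma i)
  | inG_mul A B : inG A -> inG B -> inG (A *m B)
  | inG_inv A : inG A -> inG (invmx A).

Definition gammaK (n : nat) (k : 'cV[int]_n) : nat :=
  \big[gcdn/0%N]_(j < n) `|k j ord0|%N.

Definition alphaK (n : nat) (k : 'cV[int]_n) : nat :=
  #|[set j : 'I_n | ((k j ord0 %/ (gammaK k)%:Z)%Z %% 2)%Z == 1]|.

Definition deltaK (s : nat) (k : 'cV[int]_((2 * s).+1)) : int :=
  `|(2 * alphaK k)%:Z - (2 * s + 2)%:Z|.

Definition xK (n : nat) (k : 'cV[int]_n) : int :=
  \sum_(j < n) (-1) ^+ j * k j ord0.

From mathcomp Require Import all_boot all_order all_algebra perm zify ring.
Set Implicit Arguments. Unset Strict Implicit. Unset Printing Implicit Defensive.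
Import Order.TTheory GRing.Theory Num.Theory.
Local Open Scope ring_scope.

(* It suffices to check the generators, since a property [f (A *m k) = f k]
   for all [k] passes to products and inverses.  Each coordinate of
   [sigma_i k] is an integer combination of those of [k] and conversely, so
   [gamma] is preserved; hence the generators commute with [k |-> k / gamma]
   and [alpha] only sees the parities of the primitive vector [k / gamma].
   The generator [sigma_i] (i >= 2) swaps the parities of coordinates i-1
   and i, while [sigma_1] flips the parities of the 2s coordinates other than
   [k_1] when [k_1] is odd, turning [alpha] into [2s + 2 - alpha], which
   fixes [delta].  Finally [sigma_1] changes [x] by [k_1] times an
   alternating sum of 2s signs, which vanishes. *)

Lemma neq_ord_succ n (i j : 'I_n) : i = j.+1 :> nat -> i != j.
Proof. by move=> ij; apply/eqP => e; move: ij; rewrite e; lia. Qed.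

Lemma sum_sign_even (R : pzRingType) s : \sum_(a < 2 * s) (-1) ^+ a = 0 :> R.
Proof.
elim: s => [|s IH]; first by rewrite big_ord0.
by rewrite mul2n doubleS !big_ord_recr /= -mul2n IH add0r exprS mulN1r addrN.
Qed.

Definition oddz (x : int) : bool := (x %% 2)%Z == 1.

Lemma oddzD x y : oddz (x + y) = oddz x (+) oddz y.
Proof. by rewrite /oddz; do 3!case: eqP; lia. Qed.

Lemma oddz_double_sub x y : oddz (2 * x - y) = oddz y.
Proof. by rewrite /oddz; do 2!case: eqP; lia. Qed.

Definition preserves n T (f : 'cV[int]_n -> T) (A : 'M[int]_n) :=
  forall k, f (A *m k) = f k.

Lemma inG_preserves n T (f : 'cV[int]_n.+1 -> T) :
  preserves f (sigma ord0) ->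
  (forall i j : 'I_n.+1, i = j.+1 :> nat -> preserves f (sigma i)) ->
  forall g, inG g -> preserves f g.
Proof.
move=> f0 fS g; elim=> [i|A B _ fA _ fB|A _ fA] k.
- have [j ->|->] := unliftP ord0 i; last exact: f0.
  exact: (fS _ (widen_ord (leqnSn n) j)).
- by rewrite -mulmxA fA fB.
- (* a singular [A] is its own [invmx] *)
  have [Au|An] := boolP (A \in unitmx); last by rewrite invmx_out ?inE // fA.
  by rewrite -[in RHS](mulKVmx Au k) fA.
Qed.

Lemma sigma0_mulE n (k : 'cV[int]_n.+1) a :
  (sigma ord0 *m k) a 0 = k a 0 + (a != ord0)%:R * k ord0 0.
Proof.
rewrite mxE; under eq_bigr => b _ do rewrite mxE /= PoszD mulrDl.
rewrite big_split /= (bigD1 a) //= eqxx mul1r big1 ?add0r => [|b /negPf ba]; last first.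
  by rewrite eq_sym ba mul0r.
rewrite (bigD1 ord0) //= big1 ?addr0 ?andbT => [|b b0]; last first.
  by change (b == 0 :> nat) with (b == ord0); rewrite (negPf b0) andbF mul0r.
by change (a != 0 :> nat) with (a != ord0); case: (a != ord0).
Qed.

Lemma sigmaS_mulE n (i j : 'I_n) (k : 'cV[int]_n) a : i = j.+1 :> nat ->
  (sigma i *m k) a 0 =
    if a == j then 2 * k j 0 - k i 0 else if a == i then k j 0 else k a 0.
Proof.
move=> ij; have nij := neq_ord_succ ij.
rewrite mxE; under eq_bigr => b _ do rewrite mxE ij /= -ij !val_eqE.
case: (a =P j) => [_|_].
  rewrite (bigD1 j) // (bigD1 i) //= big1 => [|b /andP[/negPf bj /negPf bi]].
    by rewrite (negPf nij) !eqxx mulN1r addr0.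
  by rewrite bj bi mul0r.
case: (a =P i) => [_|_].
  by rewrite (bigD1 j) //= eqxx mul1r big1 ?addr0 // => b /negPf->; rewrite mul0r.
rewrite (bigD1 a) //= eqxx mul1r big1 ?addr0 // => b /negPf ba.
by rewrite eq_sym ba mul0r.
Qed.

Lemma gammaK_dvdP n (k : 'cV[int]_n) (d : nat) :
  reflect (forall j, (d%:Z %| k j ord0)%Z) (d %| gammaK k)%N.
Proof.
apply: (iffP (dvdn_biggcdP xpredT (fun j => `|k j ord0|%N) d)) => dk j => [|_].
  by rewrite dvdzE dk.
by have := dk j; rewrite dvdzE.
Qed.

Lemma gammaK_dvd_mulmx n (A : 'M[int]_n) k : (gammaK k %| gammaK (A *m k))%N.
Proof.
apply/gammaK_dvdP => a; rewrite mxE; apply: rpred_sum => b _.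
by apply: dvdz_mull; move: b; apply/gammaK_dvdP.
Qed.

Lemma gammaK_sigma0 n : preserves (@gammaK n.+1) (sigma ord0).
Proof.
move=> k; apply/eqP; rewrite eqn_dvd gammaK_dvd_mulmx andbT.
have /gammaK_dvdP dvd_sk := dvdnn (gammaK (sigma ord0 *m k)).
apply/gammaK_dvdP => a.
have -> : k a 0 = (sigma ord0 *m k) a 0 - (a != ord0)%:R * (sigma ord0 *m k) ord0 0.
  by rewrite !sigma0_mulE eqxx mul0r addr0 addrK.
by rewrite rpredB ?dvdz_mull.
Qed.

Lemma gammaK_sigmaS n (i j : 'I_n) : i = j.+1 :> nat -> preserves (@gammaK n) (sigma i).
Proof.
move=> ij k; apply/eqP; rewrite eqn_dvd gammaK_dvd_mulmx andbT.
have /gammaK_dvdP dvd_sk := dvdnn (gammaK (sigma i *m k)).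
apply/gammaK_dvdP => a.
have -> : k a 0 = if a == j then (sigma i *m k) i 0
    else if a == i then 2 * (sigma i *m k) i 0 - (sigma i *m k) j 0
    else (sigma i *m k) a 0.
  rewrite !(sigmaS_mulE _ _ ij) eqxx (negPf (neq_ord_succ ij)) eqxx.
  by case: (a =P j) => [->|_] //; case: (a =P i) => [->|_] //; ring.
by do 2?case: ifP => _; rewrite ?rpredB ?dvdz_mull.
Qed.

Lemma xK_sigma0 s : preserves (@xK (2 * s).+1) (sigma ord0).
Proof.
have alt0 : \sum_(a < (2 * s).+1) (-1) ^+ a * (a != ord0)%:R = 0 :> int.
  rewrite big_ord_recl eqxx mulr0 add0r.
  under eq_bigr => a _ do rewrite eq_sym neq_lift mulr1 lift0 exprS mulN1r.
  by rewrite sumrN sum_sign_even oppr0.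
move=> k; rewrite /xK; under eq_bigr do rewrite sigma0_mulE mulrDr mulrA.
by rewrite big_split /= -mulr_suml alt0 mul0r addr0.
Qed.

Lemma xK_sigmaS n (i j : 'I_n) : i = j.+1 :> nat -> preserves (@xK n) (sigma i).
Proof.
move=> ij k; have nij := neq_ord_succ ij.
rewrite /xK; apply/eqP; rewrite -subr_eq0 -sumrB (bigD1 j) // (bigD1 i) //=.
rewrite big1 => [|a /andP[aj ai]]; last first.
  by rewrite (sigmaS_mulE _ _ ij) (negPf aj) (negPf ai) subrr.
rewrite !(sigmaS_mulE _ _ ij) (negPf nij) !eqxx ij exprS; apply/eqP; ring.
Qed.

Definition prim_part n (k : 'cV[int]_n) : 'cV[int]_n :=
  \col_j (k j ord0 %/ (gammaK k)%:Z)%Z.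

Lemma scale_prim_part n (k : 'cV[int]_n) : (gammaK k)%:Z *: prim_part k = k.
Proof. by apply/colP => a; rewrite !mxE mulrC divzK //; move: a; apply/gammaK_dvdP. Qed.

Lemma prim_part_mulmx n (A : 'M[int]_n) k : preserves (@gammaK n) A ->
  prim_part (A *m k) = A *m prim_part k.
Proof.
move=> gammaA; apply/colP => a; rewrite [LHS]mxE gammaA.
have [g0|gn0] := eqVneq (gammaK k) 0%N.
  by rewrite g0 divz0 mxE big1 // => b _; rewrite mxE g0 divz0 mulr0.
by rewrite -{1}(scale_prim_part k) -scalemxAr mxE mulKz ?eqz_nat.
Qed.

Definition odd_count n (v : 'cV[int]_n) : nat := #|[set j | oddz (v j 0)]|.

Lemma odd_count_le n (v : 'cV[int]_n) : (odd_count v <= n)%N.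
Proof. by rewrite -[X in (_ <= X)%N]card_ord max_card. Qed.

Lemma odd_count_sigma0 n (v : 'cV[int]_n.+1) :
  odd_count (sigma ord0 *m v) =
    if oddz (v ord0 0) then (n.+2 - odd_count v)%N else odd_count v.
Proof.
have oddE a : oddz ((sigma ord0 *m v) a 0) = oddz (v a 0) (+) (a != ord0) && oddz (v ord0 0).
  by rewrite sigma0_mulE oddzD; case: (a != ord0); rewrite ?mul1r ?mul0r.
rewrite /odd_count; set S := [set j | oddz (v j 0)]; case: ifPn => v0.
  have -> : [set j | oddz ((sigma ord0 *m v) j 0)] = ord0 |: ~: S.
    apply/setP => a; rewrite !inE oddE v0 andbT.
    by case: (a =P ord0) => [->|_]; rewrite ?v0 ?addbT.
  rewrite cardsU1 !inE negbK v0; have := cardsC S; rewrite card_ord; lia.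
by apply: eq_card => a; rewrite !inE oddE (negPf v0) andbF addbF.
Qed.

Lemma odd_count_sigmaS n (i j : 'I_n) (v : 'cV[int]_n) : i = j.+1 :> nat ->
  odd_count (sigma i *m v) = odd_count v.
Proof.
move=> ij; rewrite /odd_count -[RHS](@card_preimset _ (tperm j i)); last exact: perm_inj.
apply: eq_card => a; rewrite !inE (sigmaS_mulE _ _ ij).
case: tpermP => [->|->|/eqP/negPf-> /eqP/negPf->]; rewrite ?eqxx ?oddz_double_sub //.
by rewrite (negPf (neq_ord_succ ij)).
Qed.

Lemma alphaK_prim_part n (k : 'cV[int]_n) : alphaK k = odd_count (prim_part k).
Proof. by apply: eq_card => j; rewrite !inE mxE. Qed.

Lemma deltaK_sigma0 s : preserves (@deltaK s) (sigma ord0).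
Proof.
move=> k; rewrite /deltaK !alphaK_prim_part (prim_part_mulmx _ (@gammaK_sigma0 _)).
rewrite odd_count_sigma0; case: ifP => // _.
have := odd_count_le (prim_part k); lia.
Qed.

Lemma deltaK_sigmaS s (i j : 'I_(2 * s).+1) : i = j.+1 :> nat ->
  preserves (@deltaK s) (sigma i).
Proof.
move=> ij k; rewrite /deltaK !alphaK_prim_part.
by rewrite (prim_part_mulmx _ (gammaK_sigmaS ij)) (odd_count_sigmaS _ ij).
Qed.

Theorem mainTheorem6 (s : nat) (g : 'M[int]_((2 * s).+1)) (k : 'cV[int]_((2 * s).+1)) :
  inG g -> k != 0 ->
  [/\ gammaK (g *m k) = gammaK k,
      deltaK (g *m k) = deltaK k &
      xK (g *m k) = xK k].
Proof.
move=> gG _; split.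
- exact: (inG_preserves (@gammaK_sigma0 _) (@gammaK_sigmaS _) gG).
- exact: (inG_preserves (@deltaK_sigma0 s) (@deltaK_sigmaS s) gG).
- exact: (inG_preserves (@xK_sigma0 s) (@xK_sigmaS _) gG).
Qed.
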